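(* Let $n\ge1$, let $\lambda=(\lambda_1\ge\cdots\ge\lambda_n\ge0)$ be a partition (padded with zeros to length $n$), and let $\boldsymbol\beta=(\beta_1,\dots,\beta_{n-1})$ be parameters. Then, as an identity of rational functions in $q$ (equivalently, for every complex $q$ with $q^m\ne1$ for $1\le m\le n-1$), $$G_\lambda(1,q,q^2,\dots,q^{n-1}\mid\boldsymbol\beta)=\sum_{k_1=0}^{0}\sum_{k_2=0}^{1}\cdots\sum_{k_n=0}^{n-1} e^{(0)}_{k_1}e^{(1)}_{k_2}\cdots e^{(n-1)}_{k_n}\prod_{1\le i<j\le n}\frac{q^{\lambda_j+n-j+k_j}-q^{\lambda_i+n-i+k_i}}{q^{n-j}-q^{n-i}},$$ where $e^{(j-1)}_{k}=e_k(\beta_1,\dots,\beta_{j-1})$ is the $k$-th elementary symmetric polynomial in $\beta_1,\dots,\beta_{j-1}$ (with $e^{(j-1)}_0=1$). In particular, for a single parameter $\beta$, $$G_\lambda(1,q,\dots,q^{n-1}\mid\beta)=\sum_{k_1=0}^{0}\sum_{k_2=0}^{1}\cdots\sum_{k_n=0}^{n-1}\binom{0}{k_1}\binom{1}{k_2}\cdots\binom{n-1}{k_n}\beta^{k_1+\cdots+k_n}\prod_{1\le i<j\le n}\frac{q^{\lambda_j+n-j+k_j}-q^{\lambda_i+n-i+k_i}}{q^{n-j}-q^{n-i}}.$$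
   Context: The refined Grothendieck polynomial in $x=(x_1,\dots,x_n)$ with parameters $\boldsymbol\beta=(\beta_1,\dots,\beta_{n-1})$ is defined by $$G_\lambda(x\mid\boldsymbol\beta)=\frac{\det\Big(x_i^{\lambda_j+n-j}(1+\beta_1x_i)(1+\beta_2x_i)\cdots(1+\beta_{j-1}x_i)\Big)_{1\le i,j\le n}}{\prod_{1\le i<j\le n}(x_i-x_j)}$$ (for $j=1$ the product of factors $(1+\beta_\cdot x_i)$ is empty). The single-parameter Grothendieck polynomial $G_\lambda(x\mid\beta)$ is $G_\lambda(x\mid\beta,\beta,\dots,\beta)$; it is known (Ikeda–Naruse) that this equals $\sum_{T\in\mathrm{SVT}(\lambda,n)}\beta^{|T|-|\lambda|}x^{\omega(T)}$, where $\mathrm{SVT}(\lambda,n)$ is the set of set-valued tableaux of shape $\lambda$ with entries in $[n]=\{1,\dots,n\}$ (each box $(i,j)$ of the Young diagram gets a nonempty $T_{i,j}\subseteq[n]$ with $\max T_{i,j}\le\min T_{i,j+1}$, $\max T_{i,j}<\min T_{i+1,j}$), $|T|=\sum|T_{i,j}|$, $|\lambda|=\sum\lambda_i$, and $x^{\omega(T)}=\prod_m x_m^{\#\{\text{boxes whose set contains } m\}}$. *)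

From mathcomp Require Import all_boot all_order all_algebra.
Set Implicit Arguments. Unset Strict Implicit. Unset Printing Implicit Defensive.
Import Order.TTheory GRing.Theory Num.Theory.
Local Open Scope ring_scope.

(* Conventions: everything is 0-indexed. Row/column j : 'I_n corresponds to
   the paper's index j+1.  The parameters beta_1..beta_{n-1} are
   beta : 'I_n.-1 -> F, with beta m standing for beta_{m+1}. *)

Definition groth_mx (F : fieldType) (n : nat) (lam : 'I_n -> nat)
    (beta : 'I_n.-1 -> F) (x : 'I_n -> F) : 'M[F]_n :=
  \matrix_(i < n, j < n)
     (x i ^+ (lam j + (n - 1 - j)) *
      \prod_(m : 'I_n.-1 | (m < j)%N) (1 + beta m * x i)).

Definition vdm (F : fieldType) (n : nat) (x : 'I_n -> F) : F :=
  \prod_(i : 'I_n) \prod_(j : 'I_n | (i < j)%N) (x i - x j).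

(* Refined Grothendieck polynomial G_lambda(x | beta), evaluated as the
   ratio of the determinant and the Vandermonde product (meaningful when
   the x_i are pairwise distinct). *)
Definition groth (F : fieldType) (n : nat) (lam : 'I_n -> nat)
    (beta : 'I_n.-1 -> F) (x : 'I_n -> F) : F :=
  \det (groth_mx lam beta x) / vdm x.

Definition esymb (F : fieldType) (n : nat) (beta : 'I_n.-1 -> F)
    (j k : nat) : F :=
  \sum_(S : {set 'I_n.-1} | (#|S| == k) && [forall m in S, (m < j)%N])
     \prod_(m in S) beta m.

Definition qfactor (F : fieldType) (n : nat) (lam : 'I_n -> nat)
    (k : 'I_n -> nat) (q : F) : F :=
  \prod_(i : 'I_n) \prod_(j : 'I_n | (i < j)%N)
     ((q ^+ (lam j + (n - 1 - j) + k j) - q ^+ (lam i + (n - 1 - i) + k i)) /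
      (q ^+ (n - 1 - j) - q ^+ (n - 1 - i))).

From mathcomp Require Import all_boot all_order all_algebra all_fingroup zify.
Import GRing.Theory.
Local Open Scope ring_scope.

(* Expanding the products (1 + beta_m x_i) in the Grothendieck numerator
   writes its column j as sum_k e_k(beta_1..beta_j) * (column of monomials
   x_i^(lam_j + n-1-j + k)).  By multilinearity the determinant becomes a sum,
   over choices k_j <= j (the elementary symmetric polynomials vanish for
   larger k), of products of the e's times a generalized Vandermonde
   determinant.  At x_i = q^i each such determinant is an honest Vandermonde
   determinant in the nodes q^(lam_j + n-1-j + k_j), so its quotient by the
   Vandermonde product in the q^i is the stated product of ratios. *)

Lemma det_mx_col_sum (R : comNzRingType) (n : nat) (I : finType)
    (c : 'I_n -> I -> R) (G : 'I_n -> 'I_n -> I -> R) :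
  \det (\matrix_(i, j) \sum_(k : I) c j k * G i j k) =
  \sum_(g : {ffun 'I_n -> I})
     (\prod_j c j (g j)) * \det (\matrix_(i, j) G i j (g j)).
Proof.
under [RHS]eq_bigr do rewrite /(\det _) mulr_sumr.
rewrite exchange_big /=; apply: eq_bigr => s _.
rewrite (reindex_inj (@perm_inj _ s^-1)) /=.
under eq_bigr do rewrite mxE permKV.
rewrite bigA_distr_bigA mulr_sumr; apply: eq_bigr => g _.
rewrite mulrCA; congr (_ * _).
rewrite big_split /=; congr (_ * _).
rewrite (reindex_inj (@perm_inj _ s)) /=; apply: eq_bigr => i _.
by rewrite mxE permK.
Qed.

Lemma card_ord_ltn (N j : nat) : (j <= N)%N -> #|[set m : 'I_N | (m < j)%N]| = j.
Proof.
move=> le_jN.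
have -> : [set m : 'I_N | (m < j)%N] = [set widen_ord le_jN i | i in 'I_j].
  apply/setP => m; rewrite !inE; apply/idP/imsetP => [mj | [i _ ->]].
    by exists (Ordinal mj) => //; apply: val_inj.
  by rewrite /= ltn_ord.
rewrite card_imset ?card_ord // => a b /(congr1 val) ab.
exact: val_inj.
Qed.

Lemma forall_ltn_subset (N j : nat) (S : {set 'I_N}) :
  [forall m in S, (m < j)%N] = (S \subset [set m : 'I_N | (m < j)%N]).
Proof.
apply/forall_inP/subsetP => H m mS; first by rewrite inE H.
by move: (H m mS); rewrite inE.
Qed.

Section ElementarySymmetric.

Variables (F : fieldType) (n : nat).

Lemma prod_1D_esymb (beta : 'I_n.-1 -> F) (j : 'I_n) (x : F) :
  \prod_(m : 'I_n.-1 | (m < j)%N) (1 + beta m * x) =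
  \sum_(k < n) esymb beta j k * x ^+ k.
Proof.
have card_lt_n (S : {set 'I_n.-1}) : (#|S| < n)%N.
  apply: leq_ltn_trans (max_card _) _; rewrite card_ord.
  by rewrite prednK // (leq_ltn_trans (leq0n j) (ltn_ord j)).
transitivity (\prod_(m : 'I_n.-1) ((if (m < j)%N then beta m * x else 0) + 1)).
  rewrite big_mkcond; apply: eq_bigr => m _.
  by case: ifP => _; rewrite ?add0r // addrC.
rewrite bigA_distr.
transitivity (\sum_(S : {set 'I_n.-1} | [forall m in S, (m < j)%N])
                (\prod_(m in S) beta m) * x ^+ #|S|).
  rewrite [RHS]big_mkcond; apply: eq_bigr => S _.
  rewrite -big_mkcond /=.
  case: ifP => [/forall_inP Sj | /negbT].
    by rewrite -prodr_const -big_split /=; apply: eq_bigr => m /Sj ->.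
  rewrite negb_forall_in => /existsP [m /andP [mS /negbTE mj]].
  by rewrite (bigD1 m) //= mj mul0r.
rewrite (partition_big (fun S : {set 'I_n.-1} => Ordinal (card_lt_n S)) xpredT) //=.
apply: eq_bigr => k _; rewrite /esymb mulr_suml.
by apply: eq_big => [S | S /andP [_ /eqP <-]] //; rewrite andbC.
Qed.

Lemma esymb_eq0 (beta : 'I_n.-1 -> F) (j k : nat) :
  (j <= n.-1)%N -> (j < k)%N -> esymb beta j k = 0.
Proof.
move=> le_j lt_jk; rewrite /esymb big1 // => S /andP [/eqP cardS].
rewrite forall_ltn_subset => /subset_leq_card; rewrite card_ord_ltn // cardS.
by rewrite leqNgt lt_jk.
Qed.

Lemma esymb_cst (b : F) (j k : nat) :
  (j <= n.-1)%N -> esymb (fun _ : 'I_n.-1 => b) j k = ('C(j, k))%:R * b ^+ k.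
Proof.
move=> le_j; rewrite /esymb.
under eq_bigr => S /andP [/eqP cS _] do rewrite prodr_const cS.
rewrite sumr_const mulr_natl; congr (_ *+ _).
rewrite -[X in 'C(X, _)](card_ord_ltn _ _ le_j) -cards_draws cardsE.
by apply: eq_card => S; rewrite unfold_in /= forall_ltn_subset andbC.
Qed.

End ElementarySymmetric.

Section QSpecialization.

Variables (F : fieldType) (n : nat) (lam : 'I_n -> nat) (q : F).

Lemma vdm_qpow :
  vdm (fun i : 'I_n => q ^+ i) =
  \prod_(i : 'I_n) \prod_(j : 'I_n | (i < j)%N) (q ^+ (n - 1 - j) - q ^+ (n - 1 - i)).
Proof.
rewrite (reindex_inj rev_ord_inj) /=.
under [RHS]eq_bigr => i _ do rewrite (reindex_inj rev_ord_inj) /=.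
transitivity (\prod_(i : 'I_n) \prod_(j : 'I_n | (j < i)%N) (q ^+ j - q ^+ i)).
  rewrite /vdm; under eq_bigr do rewrite big_mkcond.
  rewrite exchange_big; apply: eq_bigr => i _.
  by rewrite [RHS]big_mkcond.
apply: eq_bigr => i _; apply: eq_big => [j | j _].
  by move: (ltn_ord i) (ltn_ord j) => /=; lia.
have revK (k : 'I_n) : (n - 1 - (n - k.+1) = k)%N by move: (ltn_ord k); lia.
by rewrite /= !revK.
Qed.

(* No condition on q is needed: when two nodes q^i coincide both sides are 0,
   since field division by 0 returns 0. *)
Lemma det_qpow_div_vdm (k : 'I_n -> nat) :
  \det (\matrix_(i, j) (q ^+ i) ^+ (lam j + (n - 1 - j) + k j)) /
     vdm (fun i : 'I_n => q ^+ i) = qfactor lam k q.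
Proof.
have -> : \matrix_(i, j) (q ^+ i) ^+ (lam j + (n - 1 - j) + k j) =
   Vandermonde n (\row_(j < n) q ^+ (lam j + (n - 1 - j) + k j)) :> 'M[F]_n.
  by apply/matrixP => i j; rewrite !mxE exprAC.
rewrite det_Vandermonde /qfactor vdm_qpow -prodfV -big_split /=.
apply: eq_bigr => i _; rewrite -prodfV -big_split /=.
by apply: eq_bigr => j _; rewrite !mxE.
Qed.

Lemma groth_mx_qpow (beta : 'I_n.-1 -> F) :
  groth_mx lam beta (fun i : 'I_n => q ^+ i) =
  \matrix_(i, j) \sum_(k < n) esymb beta j k *
     (q ^+ i) ^+ (lam j + (n - 1 - j) + k).
Proof.
apply/matrixP => i j; rewrite !mxE prod_1D_esymb mulr_sumr.
by apply: eq_bigr => k _; rewrite mulrCA -exprD.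
Qed.

Lemma groth_qpow (beta : 'I_n.-1 -> F) :
  groth lam beta (fun i : 'I_n => q ^+ i)
  = \sum_(k : {ffun 'I_n -> 'I_n} | [forall j, (k j <= j)%N])
      (\prod_(j : 'I_n) esymb beta j (k j)) *
      qfactor lam (fun j => nat_of_ord (k j)) q.
Proof.
rewrite /groth groth_mx_qpow det_mx_col_sum mulr_suml [RHS]big_mkcond /=.
apply: eq_bigr => k _; case: ifP => [_ | /negbT].
  by rewrite -mulrA det_qpow_div_vdm.
rewrite negb_forall => /existsP [j]; rewrite -ltnNge => lt_jk.
rewrite (bigD1 j) //= esymb_eq0 ?mul0r //.
by move: (ltn_ord j); lia.
Qed.

End QSpecialization.

Theorem theorem3p5 (F : fieldType) (n : nat) (lam : 'I_n -> nat)
    (beta : 'I_n.-1 -> F) (b : F) (q : F) :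
  (1 <= n)%N ->
  (forall i j : 'I_n, (i <= j)%N -> (lam j <= lam i)%N) ->
  (forall m : nat, (1 <= m <= n - 1)%N -> q ^+ m != 1) ->
  groth lam beta (fun i : 'I_n => q ^+ i)
  = \sum_(k : {ffun 'I_n -> 'I_n} | [forall j, (k j <= j)%N])
      (\prod_(j : 'I_n) esymb beta j (k j)) *
      qfactor lam (fun j => nat_of_ord (k j)) q
  /\
  groth lam (fun _ => b) (fun i : 'I_n => q ^+ i)
  = \sum_(k : {ffun 'I_n -> 'I_n} | [forall j, (k j <= j)%N])
      (\prod_(j : 'I_n) ('C(j, k j))%:R) * b ^+ (\sum_(j : 'I_n) k j)%N *
      qfactor lam (fun j => nat_of_ord (k j)) q.
Proof.
move=> _ _ _; split; first exact: groth_qpow.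
rewrite groth_qpow; apply: eq_bigr => k _; congr (_ * _).
rewrite -prodrXr -big_split /=; apply: eq_bigr => j _.
by rewrite esymb_cst //; move: (ltn_ord j); lia.
Qed.
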